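(* Let $n_1,n_2,n_3$ be integers with $3\le n_1,n_2\le n_3$ and $3\max(n_1,n_2)\le 2n_3\le n_1n_2$. Every set $W$ produced by the Middle Cone Construction described below is a basic landmark system for $K(\mathbf{n})$.
   Context: $K(\mathbf{n})=K_{n_1}\times K_{n_2}\times K_{n_3}$: vertices are triples $(x_1,x_2,x_3)$, $1\le x_i\le n_i$, adjacent iff they differ in every coordinate. For a vertex set $W$, $W_{i,a}=\{w\in W:w_i=a\}$. Basic landmark system: $W$ such that (1) $W_{i,a}\neq\emptyset$ for all $i\in\{1,2,3\}$, $1\le a\le n_i$; (2) $|W_{i,a}|\ge2$ for all such $i,a$; (3) $|W_{i,a}\cap W_{j,b}|\le1$ whenever $i\ne j$. Multiplicities: write $n_3=qn_1+r$, $0\le r\le n_1-1$. If $r\le n_1-r$, $(\ell_1,\dots,\ell_{n_1})$ is $(q+1,q)$ repeated $r$ times followed by $n_1-2r$ copies of $q$; if $r>n_1-r$, it is $(q+1,q)$ repeated $n_1-r$ times followed by $2r-n_1$ copies of $q+1$. Let $L_i=\sum_{j<i}\ell_j$, so block $i$ consists of columns $c$ with $L_i<c\le L_i+\ell_i$; $s_i=L_i+1$. Middle Cone Construction: $W=W^L\cup W^R$, each consisting of $n_3$ landmarks indexed by columns $c=1,\dots,n_3$. Left column $c$ in block $i$ is $(i,y^L_c,c)$; right column $c$ in block $i$ is $(i+1,y^R_c,c)$ with $n_1+1$ read as $1$. Even $n_2$, $h=n_2/2$: $y^L_c=((c-1)\bmod h)+1$, $y^R_c=h+((c-1)\bmod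 h)+1$. Odd $n_2$, $f=(n_2-1)/2$, $k=\#\{i:\ell_i>f\}$: let $S=\{s_i:\ell_i>f\}$ if $k\ge2$ and $S=\{1\}$ if $k\le1$. Set $y^L_c=n_2$ for $c\in S$ and fill the other left columns in increasing order with $1,\dots,f,1,\dots,f,\dots$; set $y^R_c=n_2$ for $c\in S+1$ and fill the other right columns in increasing order with $f+1,\dots,2f,f+1,\dots,2f,\dots$. If $k\le1$, additionally change one left landmark of the form $(x,1,z)$ with $x\notin\{1,2,n_1\}$ to $(x,n_2,z)$ (any such choice). *)

From mathcomp Require Import all_boot.
Set Implicit Arguments. Unset Strict Implicit. Unset Printing Implicit Defensive.

(* Vertices of K(n) = K_{n1} x K_{n2} x K_{n3}: triples ((x1, x2), x3), 1-indexed. *)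
Definition vtx := (nat * nat * nat)%type.
Definition mkv (x1 x2 x3 : nat) : vtx := (x1, x2, x3).

Definition coord (i : nat) (w : vtx) : nat :=
  match i with 1 => w.1.1 | 2 => w.1.2 | _ => w.2 end.

Definition dimn (n1 n2 n3 i : nat) : nat :=
  match i with 1 => n1 | 2 => n2 | _ => n3 end.

(* W is given as a list; the set W is its underlying set, and the sets
   W_{i,a} are counted on the duplicate-free list undup W. *)
Definition basic_landmark_system (n1 n2 n3 : nat) (W : seq vtx) : Prop :=
  (forall w, w \in W -> forall i, 1 <= i <= 3 -> 1 <= coord i w <= dimn n1 n2 n3 i) /\
  (forall i a, 1 <= i <= 3 -> 1 <= a <= dimn n1 n2 n3 i ->
     exists2 w, w \in W & coord i w = a) /\
  (forall i a, 1 <= i <= 3 -> 1 <= a <= dimn n1 n2 n3 i ->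
     2 <= count (fun w => coord i w == a) (undup W)) /\
  (forall i j a b, 1 <= i <= 3 -> 1 <= j <= 3 -> i != j ->
     1 <= a <= dimn n1 n2 n3 i -> 1 <= b <= dimn n1 n2 n3 j ->
     count (fun w => (coord i w == a) && (coord j w == b)) (undup W) <= 1).

Definition ells (n1 n3 : nat) : seq nat :=
  let q := n3 %/ n1 in let r := n3 %% n1 in
  if r <= n1 - r then flatten (nseq r [:: q.+1; q]) ++ nseq (n1 - 2 * r) q
  else flatten (nseq (n1 - r) [:: q.+1; q]) ++ nseq (2 * r - n1) q.+1.

Definition ell (n1 n3 i : nat) : nat := nth 0 (ells n1 n3) i.-1.
Definition Lsum (n1 n3 i : nat) : nat := sumn (take i.-1 (ells n1 n3)).
Definition sfirst (n1 n3 i : nat) : nat := (Lsum n1 n3 i).+1.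

Definition nxt (n1 i : nat) : nat := if i == n1 then 1 else i.+1.

Definition yL_even (n2 c : nat) : nat := let h := n2 %/ 2 in ((c - 1) %% h).+1.
Definition yR_even (n2 c : nat) : nat := let h := n2 %/ 2 in h + ((c - 1) %% h).+1.

Definition fodd (n2 : nat) : nat := (n2 - 1) %/ 2.
Definition kcount (n1 n2 n3 : nat) : nat :=
  count (fun i => fodd n2 < ell n1 n3 i) (iota 1 n1).
Definition inS (n1 n2 n3 c : nat) : bool :=
  if 2 <= kcount n1 n2 n3 then
    has (fun i => (fodd n2 < ell n1 n3 i) && (sfirst n1 n3 i == c)) (iota 1 n1)
  else c == 1.
Definition inS1 (n1 n2 n3 c : nat) : bool := (1 < c) && inS n1 n2 n3 c.-1.

(* other columns filled in increasing order cyclically: position among the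
   non-S columns 1..c *)
Definition yL_odd (n1 n2 n3 c : nat) : nat :=
  if inS n1 n2 n3 c then n2
  else (((count (fun c' => ~~ inS n1 n2 n3 c') (iota 1 c)) - 1) %% fodd n2).+1.
Definition yR_odd (n1 n2 n3 c : nat) : nat :=
  if inS1 n1 n2 n3 c then n2
  else fodd n2 + (((count (fun c' => ~~ inS1 n1 n2 n3 c') (iota 1 c)) - 1) %% fodd n2).+1.

Definition yL (n1 n2 n3 c : nat) : nat :=
  if odd n2 then yL_odd n1 n2 n3 c else yL_even n2 c.
Definition yR (n1 n2 n3 c : nat) : nat :=
  if odd n2 then yR_odd n1 n2 n3 c else yR_even n2 c.

Definition WL (n1 n2 n3 : nat) : seq vtx :=
  flatten [seq [seq mkv i (yL n1 n2 n3 c) c | c <- iota (sfirst n1 n3 i) (ell n1 n3 i)]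
          | i <- iota 1 n1].
Definition WR (n1 n2 n3 : nat) : seq vtx :=
  flatten [seq [seq mkv (nxt n1 i) (yR n1 n2 n3 c) c | c <- iota (sfirst n1 n3 i) (ell n1 n3 i)]
          | i <- iota 1 n1].

Definition modify (n2 x z : nat) (s : seq vtx) : seq vtx :=
  [seq (if w == mkv x 1 z then mkv x n2 z else w) | w <- s].

(* W is an output of the Middle Cone Construction (any admissible choice
   in the case n2 odd, k <= 1). *)
Definition middle_cone_output (n1 n2 n3 : nat) (W : seq vtx) : Prop :=
  if odd n2 && (kcount n1 n2 n3 <= 1) then
    exists x z, [/\ mkv x 1 z \in WL n1 n2 n3, x \notin [:: 1; 2; n1] &
                    W = modify n2 x z (WL n1 n2 n3) ++ WR n1 n2 n3]
  else W = WL n1 n2 n3 ++ WR n1 n2 n3.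

From mathcomp Require Import all_boot zify.
Set Implicit Arguments. Unset Strict Implicit. Unset Printing Implicit Defensive.

(* Column c of
   block i carries a left landmark (i, y^L_c, c) and a right landmark
   (i + 1, y^R_c, c), so the three landmark conditions reduce to conditions on the
   two colourings c |-> y^L_c and c |-> y^R_c: every colour occurs in two columns,
   the two colours of a column differ, each colouring is injective on every block,
   and the left colours of block i avoid the right colours of block i - 1 (these
   landmarks share the first coordinate i).
   For even n2 the colours are residues mod n2/2, and blocks have at most n2/2
   columns because 2 n3 <= n1 n2.  For odd n2 = 2f + 1 the left colours run
   cyclically through 1..f outside S and the right colours through f+1..2f outside
   S + 1, while S and S + 1 get the colour n2.  Blocks have at most f + 1 columns,
   and S contains the first column of each block of length f + 1, which keeps the
   cyclic colourings injective on blocks; S never meets two consecutive blocks.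
   The bound 3 max(n1, n2) <= 2 n3 leaves enough columns for every colour to
   occur at least twice. *)

Lemma count_undup_le1 (T : eqType) (p : pred T) (s : seq T) :
  (forall x y, x \in s -> y \in s -> p x -> p y -> x = y) ->
  count p (undup s) <= 1.
Proof.
move=> p_single; rewrite -size_filter.
case E: (filter p (undup s)) => [|x t]; first by [].
rewrite -E.
have : x \in filter p (undup s) by rewrite E mem_head.
rewrite mem_filter mem_undup => /andP[px xs].
have sub : {subset filter p (undup s) <= [:: x]}.
  move=> y; rewrite mem_filter mem_undup => /andP[py ys].
  by rewrite inE (p_single _ _ ys xs py px).
exact: uniq_leq_size (filter_uniq p (undup_uniq s)) sub.
Qed.

Lemma count_uniq_ge2 (T : eqType) (p : pred T) (s : seq T) x y :
  uniq s -> x != y -> x \in s -> y \in s -> p x -> p y -> 2 <= count p s.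
Proof.
move=> us nxy xs ys px py; rewrite -size_filter.
have uxy : uniq [:: x; y] by rewrite /= inE nxy.
apply: uniq_leq_size uxy _ => z; rewrite !inE => /orP[]/eqP->.
  by rewrite mem_filter px.
by rewrite mem_filter py.
Qed.

Lemma count_undup_ge2 (T : eqType) (p : pred T) (s : seq T) x y :
  x != y -> x \in s -> y \in s -> p x -> p y -> 2 <= count p (undup s).
Proof.
by move=> nxy xs ys; apply: count_uniq_ge2 (undup_uniq s) nxy _ _; rewrite mem_undup.
Qed.

Lemma count_iota_split (p : pred nat) c c' : c <= c' ->
  count p (iota 1 c') = count p (iota 1 c) + count p (iota c.+1 (c' - c)).
Proof. by move=> le_cc'; rewrite -{1}(subnKC le_cc') iotaD count_cat add1n. Qed.

Lemma count_iota_last (p : pred nat) n :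
  count p (iota 1 n.+1) = count p (iota 1 n) + p n.+1.
Proof. by rewrite (count_iota_split p (leqnSn n)) subSnn /= addn0. Qed.

Lemma count_iota_reach (p : pred nat) n m : 1 <= m <= count p (iota 1 n) ->
  exists c, [/\ 1 <= c <= n, p c & count p (iota 1 c) = m].
Proof.
elim: n => [|n IHn] hm; first by move: hm => /=; lia.
rewrite count_iota_last in hm.
case: (leqP m (count p (iota 1 n))) => hmn.
  by have [c [hc pc ec]] := IHn ltac:(lia); exists c; split => //; lia.
exists n.+1; case pn: (p n.+1) hm => hm; last by move: hm => /=; lia.
by split; [lia | done | rewrite count_iota_last pn; move: hm => /=; lia].
Qed.

Lemma eq_mod_close d x y : 0 < d -> x %% d = y %% d -> x <= y < x + d -> x = y.
Proof.
move=> d_gt0 exy /andP[le lt]; have : d %| y - x by rewrite -eqn_mod_dvd // exy.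
case: (posnP (y - x)) => [|yx_gt0]; first lia.
by move/(dvdn_leq yx_gt0); lia.
Qed.

Lemma sumn_ge_mul (s : seq nat) (g : nat -> nat) f :
  (forall i, i \in s -> f <= g i) -> f * size s <= sumn [seq g i | i <- s].
Proof.
elim: s => [|x s IHs] gf /=; first by rewrite muln0.
have := gf x (mem_head _ _).
have := IHs (fun i si => gf i (ltac:(by rewrite inE si orbT))); lia.
Qed.

Lemma nxt_range n1 i : 1 <= i <= n1 -> 1 <= nxt n1 i <= n1.
Proof. by move=> *; rewrite /nxt; case: ifP => /eqP *; lia. Qed.

Lemma nxt_neq n1 i : 2 <= n1 -> 1 <= i <= n1 -> nxt n1 i != i.
Proof. by move=> *; rewrite /nxt; case: ifP => /eqP *; lia. Qed.

Lemma nxt_inj n1 i j : 1 <= i <= n1 -> 1 <= j <= n1 -> nxt n1 i = nxt n1 j -> i = j.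
Proof. by rewrite /nxt => hi hj; case: (i =P n1) => ?; case: (j =P n1) => ?; lia. Qed.

Lemma nxt_onto n1 a : 2 <= n1 -> 1 <= a <= n1 -> exists2 j, 1 <= j <= n1 & nxt n1 j = a.
Proof.
move=> n1_ge2 ha; case: (a =P 1) => [->|a_neq1].
  by exists n1; [lia | rewrite /nxt eqxx].
by exists a.-1; [lia | rewrite /nxt; case: ifP => /eqP *; lia].
Qed.

Lemma nth_flatten_pair (a b : nat) r t j :
  nth 0 (flatten (nseq r [:: a; b]) ++ t) j =
  if j < 2 * r then (if odd j then b else a) else nth 0 t (j - 2 * r).
Proof.
elim: r j => [|r IHr] j; first by rewrite /= subn0.
rewrite /= -/(flatten _).
case: j => [|[|j]] //=; first by have -> : 1 < 2 * r.+1 by lia.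
rewrite IHr negbK.
have -> : (j.+2 < 2 * r.+1) = (j < 2 * r) by lia.
by have -> : j.+2 - 2 * r.+1 = j - 2 * r by lia.
Qed.

Lemma size_flatten_pair (a b : nat) r : size (flatten (nseq r [:: a; b])) = 2 * r.
Proof. by elim: r => //= r IHr; rewrite -/(flatten _) IHr; lia. Qed.

Lemma sumn_flatten_pair (a b : nat) r : sumn (flatten (nseq r [:: a; b])) = r * (a + b).
Proof. by elim: r => //= r IHr; rewrite -/(flatten _) IHr; lia. Qed.

Definition in_block (n1 n3 i c : nat) : bool :=
  (1 <= i <= n1) && (sfirst n1 n3 i <= c < sfirst n1 n3 i + ell n1 n3 i).

Lemma in_block_diff n1 n3 i c c' :
  in_block n1 n3 i c -> in_block n1 n3 i c' -> c' < c + ell n1 n3 i.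
Proof. by rewrite /in_block; lia. Qed.

Section Blocks.

Variables n1 n3 : nat.
Hypothesis n1_gt0 : 0 < n1.

Lemma size_ells : size (ells n1 n3) = n1.
Proof.
rewrite /ells; have := ltn_pmod n3 n1_gt0.
by case: ifP => hr; rewrite size_cat size_flatten_pair size_nseq; lia.
Qed.

Lemma sumn_ells : sumn (ells n1 n3) = n3.
Proof.
rewrite /ells; have := ltn_pmod n3 n1_gt0; have := divn_eq n3 n1.
set q := n3 %/ n1; set r := n3 %% n1 => e r_lt.
by case: ifP => hr; rewrite sumn_cat sumn_flatten_pair sumn_nseq; nia.
Qed.

Lemma ellE i : 1 <= i <= n1 ->
  ell n1 n3 i =
  if n3 %% n1 <= n1 - n3 %% n1 then
    (if (i.-1 < 2 * (n3 %% n1)) && ~~ odd i.-1 then (n3 %/ n1).+1 else n3 %/ n1)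
  else (if (i.-1 < 2 * (n1 - n3 %% n1)) && odd i.-1 then n3 %/ n1 else (n3 %/ n1).+1).
Proof.
move=> hi; rewrite /ell /ells; have := ltn_pmod n3 n1_gt0.
set q := n3 %/ n1; set r := n3 %% n1 => r_lt.
case: ifP => hr; rewrite nth_flatten_pair nth_nseq; case: ifP => hj /=.
- by case: odd.
- by have -> : i.-1 - 2 * r < n1 - 2 * r by lia.
- by case: odd.
- by have -> : i.-1 - 2 * (n1 - r) < 2 * r - n1 by lia.
Qed.

Lemma ell_bounds i : 1 <= i <= n1 -> n3 %/ n1 <= ell n1 n3 i <= (n3 %/ n1).+1.
Proof. by move=> hi; rewrite ellE //; case: ifP => _; case: ifP => _; lia. Qed.

Lemma ell_long_mod i : 1 <= i <= n1 -> ell n1 n3 i = (n3 %/ n1).+1 -> 0 < n3 %% n1.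
Proof.
move=> hi; rewrite ellE //; have := ltn_pmod n3 n1_gt0.
by case: ifP => hr; case: ifP => hj /=; lia.
Qed.

Lemma ell_le_ell1 i : 1 <= i <= n1 -> ell n1 n3 i <= ell n1 n3 1.
Proof.
move=> hi; rewrite (ellE hi) (ellE (i := 1)) /=; last lia.
have := ltn_pmod n3 n1_gt0.
by case: ifP => hr; case: ifP => hj; case: ifP => hk; move: hj hk; rewrite ?andbT //=; lia.
Qed.

Lemma ell1_long : 0 < n3 %% n1 -> ell n1 n3 1 = (n3 %/ n1).+1.
Proof.
move=> r_gt0; rewrite (ellE (i := 1)) /=; last lia.
have -> : 0 < 2 * (n3 %% n1) by lia.
have -> : 0 < 2 * (n1 - n3 %% n1) by have := ltn_pmod n3 n1_gt0; lia.
by case: ifP.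
Qed.

Lemma sfirst1 : sfirst n1 n3 1 = 1.
Proof. by rewrite /sfirst /Lsum take0. Qed.

Lemma sfirstS i : 1 <= i <= n1 -> sfirst n1 n3 i.+1 = sfirst n1 n3 i + ell n1 n3 i.
Proof.
move=> hi; rewrite /sfirst /Lsum /ell /=.
have {1}-> : i = i.-1.+1 by lia.
by rewrite (take_nth 0) ?sumn_rcons ?size_ells; lia.
Qed.

Lemma sfirst_last : sfirst n1 n3 n1.+1 = n3.+1.
Proof. by rewrite /sfirst /Lsum /= take_oversize ?sumn_ells ?size_ells. Qed.

Lemma sfirst_mono i k : 1 <= i -> i + k <= n1.+1 -> sfirst n1 n3 i <= sfirst n1 n3 (i + k).
Proof.
move=> hi; elim: k => [|k IHk] hk; first by rewrite addn0.
by rewrite addnS sfirstS; [have := IHk ltac:(lia); lia | lia].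
Qed.

Lemma in_block_end_le i j : 1 <= i < j -> j <= n1.+1 ->
  sfirst n1 n3 i + ell n1 n3 i <= sfirst n1 n3 j.
Proof.
move=> hij hj; rewrite -sfirstS; last lia.
have -> : j = i.+1 + (j - i.+1) by lia.
by apply: sfirst_mono; lia.
Qed.

Lemma in_block_range i c : in_block n1 n3 i c -> (1 <= i <= n1) && (1 <= c <= n3).
Proof.
move=> /andP[hi hc]; rewrite hi /=.
have := sfirst_mono (i := 1) (k := i - 1) (leqnn _) ltac:(lia).
rewrite sfirst1 (_ : 1 + (i - 1) = i); last lia.
have := in_block_end_le (i := i) (j := n1.+1) ltac:(lia) (leqnn _).
rewrite sfirst_last; lia.
Qed.

Lemma in_block_uniq i j c : in_block n1 n3 i c -> in_block n1 n3 j c -> i = j.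
Proof.
move=> Bi Bj; have /andP[hi _] := in_block_range Bi; have /andP[hj _] := in_block_range Bj.
move: Bi Bj => /andP[_ Bi] /andP[_ Bj].
case: (ltngtP i j) => hij //.
- by have := in_block_end_le (i := i) (j := j) ltac:(lia) ltac:(lia); lia.
- by have := in_block_end_le (i := j) (j := i) ltac:(lia) ltac:(lia); lia.
Qed.

Lemma in_block_cover c : 1 <= c <= n3 -> exists i, in_block n1 n3 i c.
Proof.
move=> hc.
suff : forall m, m <= n1 -> c < sfirst n1 n3 m.+1 -> exists i, in_block n1 n3 i c.
  by move=> reach; apply: (reach n1); rewrite ?sfirst_last; lia.
elim => [|m IHm] hm; first by rewrite sfirst1; lia.
rewrite (sfirstS (i := m.+1)); last lia.
case: (leqP (sfirst n1 n3 m.+1) c) => hc1 hc2; last by apply: IHm; lia.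
by exists m.+1; rewrite /in_block hc1 hc2; lia.
Qed.

Lemma count_columns_by_block (p : pred nat) :
  count p (iota 1 n3) =
  sumn [seq count p (iota (sfirst n1 n3 i) (ell n1 n3 i)) | i <- iota 1 n1].
Proof.
suff prefix m : m <= n1 -> iota 1 (sfirst n1 n3 m.+1).-1 =
    flatten [seq iota (sfirst n1 n3 i) (ell n1 n3 i) | i <- iota 1 m].
  by have := prefix n1 (leqnn _); rewrite sfirst_last /= => ->; rewrite count_flatten -map_comp.
elim: m => [|m IHm] hm; first by rewrite sfirst1.
rewrite (sfirstS (i := m.+1)); last lia.
have sf_pos : 1 <= sfirst n1 n3 m.+1.
  by have := sfirst_mono (i := 1) (k := m) (leqnn _) ltac:(lia); rewrite sfirst1 add1n; lia.
have -> : (sfirst n1 n3 m.+1 + ell n1 n3 m.+1).-1 =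
          (sfirst n1 n3 m.+1).-1 + ell n1 n3 m.+1 by lia.
rewrite iotaD IHm; last lia.
rewrite (_ : 1 + _ = sfirst n1 n3 m.+1); last lia.
have -> : iota 1 m.+1 = iota 1 m ++ [:: m.+1] by rewrite -[m.+1]addn1 iotaD add1n addn1.
by rewrite map_cat flatten_cat /= cats0.
Qed.

Hypothesis n1_le_n3 : n1 <= n3.

Lemma in_block_sfirst i : 1 <= i <= n1 -> in_block n1 n3 i (sfirst n1 n3 i).
Proof.
move=> hi; rewrite /in_block hi leqnn /=.
have q_gt0 : 0 < n3 %/ n1 by rewrite divn_gt0.
by have := ell_bounds hi; lia.
Qed.

End Blocks.

Definition cone_vertex (n1 n3 : nat) (gL gR : nat -> nat) (w : vtx) : Prop :=
  exists i c, in_block n1 n3 i c /\ (w = mkv i (gL c) c \/ w = mkv (nxt n1 i) (gR c) c).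

Definition colours_at (gL gR : nat -> nat) (a c : nat) : bool := (gL c == a) || (gR c == a).

Record cone_colouring (n1 n2 n3 : nat) (gL gR : nat -> nat) : Prop := ConeColouring {
  colour_range : forall c, 1 <= c <= n3 -> (1 <= gL c <= n2) && (1 <= gR c <= n2);
  colour_sides : forall c, 1 <= c <= n3 -> gL c <> gR c;
  colour_twice : forall a, 1 <= a <= n2 -> exists c c',
    [/\ 1 <= c <= n3, 1 <= c' <= n3, c != c', colours_at gL gR a c & colours_at gL gR a c'];
  colour_injL : forall i c c', in_block n1 n3 i c -> in_block n1 n3 i c' -> gL c = gL c' -> c = c';
  colour_injR : forall i c c', in_block n1 n3 i c -> in_block n1 n3 i c' -> gR c = gR c' -> c = c';
  colour_adj : forall i j c c', in_block n1 n3 i c -> in_block n1 n3 j c' -> nxt n1 j = i ->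
    gL c <> gR c'
}.

Section Criterion.

Variables (n1 n2 n3 : nat) (gL gR : nat -> nat) (W : seq vtx).
Hypotheses (n1_ge2 : 2 <= n1) (n1_le_n3 : n1 <= n3).
Hypothesis col : cone_colouring n1 n2 n3 gL gR.
Hypothesis memW : forall w, w \in W <-> cone_vertex n1 n3 gL gR w.

Let n1_gt0 : 0 < n1. Proof. by apply: leq_trans n1_ge2. Qed.

Let memL i c : in_block n1 n3 i c -> mkv i (gL c) c \in W.
Proof. by move=> Bic; apply/memW; exists i, c; auto. Qed.

Let memR i c : in_block n1 n3 i c -> mkv (nxt n1 i) (gR c) c \in W.
Proof. by move=> Bic; apply/memW; exists i, c; auto. Qed.

Lemma cone_coord_range w : w \in W ->
  forall k, 1 <= k <= 3 -> 1 <= coord k w <= dimn n1 n2 n3 k.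
Proof.
move=> /memW [i [c [Bic ew]]] k hk.
have /andP[hi hc] := in_block_range n1_gt0 Bic.
have /andP[rL rR] := colour_range col hc.
by case: k hk => [|[|[|[|k]]]] //= _; case: ew => -> //=; apply: nxt_range.
Qed.

Lemma cone_coord_twice k a : 1 <= k <= 3 -> 1 <= a <= dimn n1 n2 n3 k ->
  2 <= count (fun w => coord k w == a) (undup W).
Proof.
case: k => [|[|[|[|k]]]] //= _ ha.
- have [j hj ej] := nxt_onto n1_ge2 ha.
  have Ba := in_block_sfirst n1_gt0 n1_le_n3 ha; have Bj := in_block_sfirst n1_gt0 n1_le_n3 hj.
  apply: count_undup_ge2 (memL Ba) (memR Bj) _ _; rewrite /= ?ej //.
  apply/negP => /eqP[_ e]; rewrite /sfirst -e in Bj.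
  by move: (nxt_neq n1_ge2 hj); rewrite ej (in_block_uniq n1_gt0 Ba Bj) eqxx.
- have [c [c' [hc hc' ncc' col_c col_c']]] := colour_twice col ha.
  have [i Bi] := in_block_cover n1_gt0 hc; have [i' Bi'] := in_block_cover n1_gt0 hc'.
  pose x := if gL c == a then mkv i (gL c) c else mkv (nxt n1 i) (gR c) c.
  pose y := if gL c' == a then mkv i' (gL c') c' else mkv (nxt n1 i') (gR c') c'.
  apply: (@count_undup_ge2 _ _ _ x y).
  + by rewrite /x /y; apply/negP; do 2 case: ifP => _; move/eqP=> [_ _ e]; rewrite e eqxx in ncc'.
  + by rewrite /x; case: ifP => _; [apply: memL | apply: memR].
  + by rewrite /y; case: ifP => _; [apply: memL | apply: memR].
  + by rewrite /x; case: ifP => //= gLc; move: col_c; rewrite /colours_at gLc.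
  + by rewrite /y; case: ifP => //= gLc'; move: col_c'; rewrite /colours_at gLc'.
- have [i Bi] := in_block_cover n1_gt0 ha; have /andP[hi _] := in_block_range n1_gt0 Bi.
  apply: count_undup_ge2 (memL Bi) (memR Bi) _ _ => //.
  by apply/negP => /eqP[e _]; move: (nxt_neq n1_ge2 hi); rewrite -e eqxx.
Qed.

Lemma count_coord13_le1 a b :
  count (fun w => (coord 1 w == a) && (coord 3 w == b)) (undup W) <= 1.
Proof.
apply: count_undup_le1 => x y /memW [i [c [Bi ex]]] /memW [j [d [Bj ey]]].
have /andP[hi _] := in_block_range n1_gt0 Bi.
case: ex => ->; case: ey => -> /= /andP[/eqP e1 /eqP e2] /andP[/eqP e3 /eqP e4];
  subst c d; have eij := in_block_uniq n1_gt0 Bi Bj; subst j => //.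
all: by move/eqP: (nxt_neq n1_ge2 hi); congruence.
Qed.

Lemma count_coord23_le1 a b :
  count (fun w => (coord 2 w == a) && (coord 3 w == b)) (undup W) <= 1.
Proof.
apply: count_undup_le1 => x y /memW [i [c [Bi ex]]] /memW [j [d [Bj ey]]].
have /andP[_ hc] := in_block_range n1_gt0 Bi.
case: ex => ->; case: ey => -> /= /andP[/eqP e1 /eqP e2] /andP[/eqP e3 /eqP e4];
  subst c d; have eij := in_block_uniq n1_gt0 Bi Bj; subst j => //.
all: by case: (colour_sides col hc); rewrite ?e1 ?e3.
Qed.

Lemma count_coord12_le1 a b :
  count (fun w => (coord 1 w == a) && (coord 2 w == b)) (undup W) <= 1.
Proof.
apply: count_undup_le1 => x y /memW [i [c [Bi ex]]] /memW [j [d [Bj ey]]].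
have /andP[hi _] := in_block_range n1_gt0 Bi; have /andP[hj _] := in_block_range n1_gt0 Bj.
case: ex => ->; case: ey => -> /= /andP[/eqP e1 /eqP e2] /andP[/eqP e3 /eqP e4].
- have eji : j = i by rewrite e1 e3.
  rewrite eji in Bj *.
  by rewrite (colour_injL col Bi Bj (etrans e2 (esym e4))).
- by case: (colour_adj col Bi Bj (etrans e3 (esym e1)) (etrans e2 (esym e4))).
- by case: (colour_adj col Bj Bi (etrans e1 (esym e3)) (etrans e4 (esym e2))).
- have eij := nxt_inj hi hj (etrans e1 (esym e3)); rewrite -eij in Bj *.
  by rewrite (colour_injR col Bi Bj (etrans e2 (esym e4))).
Qed.

Lemma cone_landmark_system : basic_landmark_system n1 n2 n3 W.
Proof.
split; [exact: cone_coord_range | split; [|split]].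
- move=> k a hk ha; have : has (fun w => coord k w == a) (undup W).
    by rewrite has_count; have := cone_coord_twice hk ha; lia.
  by move=> /hasP[w]; rewrite mem_undup => wW /eqP ew; exists w.
- exact: cone_coord_twice.
- move=> k l a b hk hl nkl ha hb.
  wlog lt_kl : k l a b hk hl nkl ha hb / k < l.
    move=> ih; case: (ltngtP k l) => [lt_kl | lt_lk | ekl]; first exact: ih.
      rewrite (eq_count (a2 := fun w => (coord l w == b) && (coord k w == a))).
        by apply: ih; rewrite // eq_sym.
      by move=> w; rewrite andbC.
    by rewrite ekl eqxx in nkl.
  case: k l {nkl ha hb} hk hl lt_kl => [|[|[|[|k]]]] [|[|[|[|l]]]] //= _ _ _.
  + exact: count_coord12_le1.
  + exact: count_coord13_le1.
  + exact: count_coord23_le1.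
Qed.

End Criterion.

Lemma mem_WL n1 n2 n3 w : w \in WL n1 n2 n3 <->
  exists i c, in_block n1 n3 i c /\ w = mkv i (yL n1 n2 n3 c) c.
Proof.
rewrite /WL; split.
  move/flatten_mapP => [i hi /mapP[c hc ->]]; exists i, c; split => //.
  by move: hi hc; rewrite /in_block !mem_iota; lia.
move=> [i [c [/andP[hi hc] ->]]]; apply/flatten_mapP; exists i; first by rewrite mem_iota; lia.
by apply/mapP; exists c => //; rewrite mem_iota; lia.
Qed.

Lemma mem_WR n1 n2 n3 w : w \in WR n1 n2 n3 <->
  exists i c, in_block n1 n3 i c /\ w = mkv (nxt n1 i) (yR n1 n2 n3 c) c.
Proof.
rewrite /WR; split.
  move/flatten_mapP => [i hi /mapP[c hc ->]]; exists i, c; split => //.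
  by move: hi hc; rewrite /in_block !mem_iota; lia.
move=> [i [c [/andP[hi hc] ->]]]; apply/flatten_mapP; exists i; first by rewrite mem_iota; lia.
by apply/mapP; exists c => //; rewrite mem_iota; lia.
Qed.

Lemma mem_cone_cat n1 n3 (sL sR : seq vtx) (gL gR : nat -> nat) :
  (forall w, w \in sL <-> exists i c, in_block n1 n3 i c /\ w = mkv i (gL c) c) ->
  (forall w, w \in sR <-> exists i c, in_block n1 n3 i c /\ w = mkv (nxt n1 i) (gR c) c) ->
  forall w, w \in sL ++ sR <-> cone_vertex n1 n3 gL gR w.
Proof.
move=> memL memR w; rewrite mem_cat; split.
  by case/orP => [/memL|/memR] [i [c [Bic ->]]]; exists i, c; split; auto.
move=> [i [c [Bic [->|->]]]]; apply/orP; [left; apply/memL | right; apply/memR];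
by exists i, c.
Qed.

Definition recolour (g : nat -> nat) (z v c : nat) : nat := if c == z then v else g c.

Lemma mem_modify n1 n2 n3 (s : seq vtx) (g : nat -> nat) x0 z0 :
  0 < n1 -> in_block n1 n3 x0 z0 -> g z0 = 1 ->
  (forall w, w \in s <-> exists i c, in_block n1 n3 i c /\ w = mkv i (g c) c) ->
  forall w, w \in modify n2 x0 z0 s <->
    exists i c, in_block n1 n3 i c /\ w = mkv i (recolour g z0 n2 c) c.
Proof.
move=> n1_gt0 Bz0 gz0 mems w; rewrite /modify /recolour; split.
  move/mapP => [_ /mems [i [c [Bic ->]]] ->]; exists i, c; split => //.
  case: eqP => [[-> _ ->]|ne]; first by rewrite eqxx.
  case: (c =P z0) => // ecz; case: ne.
  by rewrite ecz in Bic *; rewrite (in_block_uniq n1_gt0 Bic Bz0) gz0.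
move=> [i [c [Bic ->]]]; apply/mapP; exists (mkv i (g c) c); first by apply/mems; exists i, c.
case: (c =P z0) => [ecz|ne].
  by rewrite ecz in Bic *; rewrite (in_block_uniq n1_gt0 Bic Bz0) gz0 eqxx.
by case: eqP => // [[_ _ ecz]]; case: ne.
Qed.

Lemma colours_at_recolour gL gR z v a c : a != gL z ->
  colours_at gL gR a c -> colours_at (recolour gL z v) gR a c.
Proof.
rewrite /colours_at /recolour => ne; case: (c =P z) => [->|] //.
by case/orP => [/eqP e|->]; [rewrite e eqxx in ne | rewrite orbT].
Qed.

Lemma recolour_cone_colouring n1 n2 n3 gL gR x0 z0 v :
  0 < n1 -> cone_colouring n1 n2 n3 gL gR -> in_block n1 n3 x0 z0 -> 1 <= v <= n2 ->
  (forall c, in_block n1 n3 x0 c -> gL c <> v) ->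
  (forall j c, in_block n1 n3 j c -> nxt n1 j = x0 -> gR c <> v) ->
  gR z0 <> v ->
  (exists c c', [/\ 1 <= c <= n3, 1 <= c' <= n3, c != c', c != z0 & c' != z0] /\
     colours_at gL gR (gL z0) c && colours_at gL gR (gL z0) c') ->
  cone_colouring n1 n2 n3 (recolour gL z0 v) gR.
Proof.
move=> n1_gt0 col Bz0 hv newL newR newz0 old_twice.
have inx0 i c : in_block n1 n3 i c -> c = z0 -> i = x0.
  by move=> Bic ecz; rewrite ecz in Bic; exact: (in_block_uniq n1_gt0 Bic Bz0).
rewrite /recolour; split.
- move=> c hc; have := colour_range col hc; case: eqP => // _ /andP[_ ->].
  by rewrite hv.
- move=> c hc; case: (c =P z0) => [->|_]; first by move/esym.
  exact: (colour_sides col hc).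
- move=> a ha; case: (a =P gL z0) => [->|/eqP ne].
    have [c [c' [[hc hc' ncc' ncz nc'z] /andP[col_c col_c']]]] := old_twice.
    by exists c, c'; split => //; rewrite /colours_at /= ?(negbTE ncz) ?(negbTE nc'z).
  have [c [c' [hc hc' ncc' col_c col_c']]] := colour_twice col ha.
  by exists c, c'; split => //; apply: colours_at_recolour.
- move=> i c c' Bc Bc'.
  case: (c =P z0) => [ecz|ncz]; case: (c' =P z0) => [ec'z|nc'z] //; try congruence.
  + by move=> e; case: (newL c'); rewrite -?(inx0 _ _ Bc ecz).
  + by move/esym => e; case: (newL c); rewrite -?(inx0 _ _ Bc' ec'z).
  + exact: (colour_injL col Bc Bc').
- exact: colour_injR col.
- move=> i j c c' Bc Bc' eji; case: (c =P z0) => [ecz|_].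
    by move/esym; apply: newR Bc' _; rewrite eji (inx0 _ _ Bc ecz).
  exact: (colour_adj col Bc Bc' eji).
Qed.

Lemma even_cone_colouring n1 n2 n3 :
  0 < n1 -> ~~ odd n2 -> 2 <= n2 -> n2 <= n3 ->
  (forall i, 1 <= i <= n1 -> ell n1 n3 i <= n2 %/ 2) ->
  cone_colouring n1 n2 n3 (yL_even n2) (yR_even n2).
Proof.
move=> n1_gt0 n2_even n2_ge2 n2_le_n3 ell_le.
have n2E : n2 = 2 * (n2 %/ 2).
  by have := divn_eq n2 2; rewrite modn2 (negbTE n2_even); lia.
rewrite /yL_even /yR_even; set h := n2 %/ 2 in n2E ell_le *.
have h_gt0 : 0 < h by lia.
have mod_lt x : x %% h < h by apply: ltn_pmod.
(* a block has at most h columns, so their residues mod h differ *)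
have inj i c c' : in_block n1 n3 i c -> in_block n1 n3 i c' ->
    (c - 1) %% h = (c' - 1) %% h -> c = c'.
  move=> Bc Bc' e.
  have /andP[hi /andP[c_ge1 _]] := in_block_range n1_gt0 Bc.
  have /andP[_ /andP[c'_ge1 _]] := in_block_range n1_gt0 Bc'.
  have := ell_le i hi; have := in_block_diff Bc Bc'; have := in_block_diff Bc' Bc => d1 d2 ell_i.
  case: (leqP c c') => le_cc'.
    by have := eq_mod_close h_gt0 e (_ : c - 1 <= c' - 1 < c - 1 + h); lia.
  by have := eq_mod_close h_gt0 (esym e) (_ : c' - 1 <= c - 1 < c' - 1 + h); lia.
split.
- by move=> c _; have := mod_lt (c - 1); lia.
- by move=> c _; have := mod_lt (c - 1); lia.
- move=> a ha; rewrite /colours_at; case: (leqP a h) => hah.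
    have ra : (a - 1) %% h = a - 1 by rewrite modn_small; lia.
    have rah : (a + h - 1) %% h = a - 1.
      by rewrite (_ : a + h - 1 = (a - 1) + h) ?modnDr // ; lia.
    by exists a, (a + h); rewrite ra rah; split; lia.
  have rah : (a - h - 1) %% h = a - h - 1 by rewrite modn_small; lia.
  have ra : (a - 1) %% h = a - h - 1.
    by rewrite (_ : a - 1 = (a - h - 1) + h) ?modnDr //; lia.
  by exists (a - h), a; rewrite ra rah; split; lia.
- by move=> i c c' Bc Bc' e; apply: inj Bc Bc' _; lia.
- by move=> i c c' Bc Bc' e; apply: inj Bc Bc' _; lia.
- by move=> i j c c' _ _ _; have := mod_lt (c - 1); have := mod_lt (c' - 1); lia.
Qed.

Lemma fodd_double n2 : odd n2 -> n2 = 2 * fodd n2 + 1.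
Proof.
by move=> n2_odd; have := odd_double_half n2; rewrite n2_odd /fodd -muln2; lia.
Qed.

Lemma mod_colour_val f a k : 0 < f -> 1 <= a <= f -> ((a + k * f - 1) %% f).+1 = a.
Proof.
move=> f_gt0 ha; rewrite (_ : a + k * f - 1 = k * f + (a - 1)); last lia.
by rewrite modnMDl modn_small; lia.
Qed.

Lemma rank_colour_neq (Q : pred nat) f c c' : 0 < f -> 1 <= c < c' -> Q c -> Q c' ->
  count Q (iota c.+1 (c' - c)) < f ->
  (count Q (iota 1 c) - 1) %% f <> (count Q (iota 1 c') - 1) %% f.
Proof.
move=> f_gt0 hcc' Qc Qc' few; rewrite (count_iota_split Q (ltnW (proj2 (andP hcc')))).
have : 0 < count Q (iota 1 c) by rewrite -has_count; apply/hasP; exists c; rewrite ?mem_iota; lia.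
have : 0 < count Q (iota c.+1 (c' - c)).
  by rewrite -has_count; apply/hasP; exists c'; rewrite ?mem_iota; lia.
move=> D_gt0 A_gt0 e; have := eq_mod_close f_gt0 e; lia.
Qed.

Lemma count_predC_lt_size (T : eqType) (q : pred T) s x :
  x \in s -> q x -> count (fun y => ~~ q y) s < size s.
Proof.
move=> xs qx; rewrite -(count_predC q s).
have -> : count (fun y => ~~ q y) s = count (predC q) s by [].
have : 0 < count q s by rewrite -has_count; apply/hasP; exists x.
lia.
Qed.

Definition next_col (P : pred nat) (c : nat) : bool := (1 < c) && P c.-1.

Definition left_colour (n2 : nat) (P : pred nat) (c : nat) : nat :=
  if P c then n2 else ((count (fun c' => ~~ P c') (iota 1 c) - 1) %% fodd n2).+1.

Definition right_colour (n2 : nat) (P : pred nat) (c : nat) : nat :=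
  if next_col P c then n2
  else fodd n2 + ((count (fun c' => ~~ next_col P c') (iota 1 c) - 1) %% fodd n2).+1.

Lemma fodd_gt0 n2 : 3 <= n2 -> 0 < fodd n2.
Proof. by move=> n2_ge3; rewrite divn_gt0 //; lia. Qed.

Lemma left_colour_P n2 (P : pred nat) c : P c -> left_colour n2 P c = n2.
Proof. by rewrite /left_colour => ->. Qed.

Lemma left_colour_nP n2 (P : pred nat) c : 3 <= n2 -> ~~ P c -> 1 <= left_colour n2 P c <= fodd n2.
Proof.
move=> n2_ge3 nPc; rewrite /left_colour (negbTE nPc).
by have := ltn_pmod (count (fun c' => ~~ P c') (iota 1 c) - 1) (fodd_gt0 n2_ge3); lia.
Qed.

Lemma right_colour_P n2 (P : pred nat) c : next_col P c -> right_colour n2 P c = n2.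
Proof. by rewrite /right_colour => ->. Qed.

Lemma right_colour_nP n2 (P : pred nat) c : 3 <= n2 -> ~~ next_col P c ->
  (fodd n2).+1 <= right_colour n2 P c <= 2 * fodd n2.
Proof.
move=> n2_ge3 nPc; rewrite /right_colour (negbTE nPc).
by have := ltn_pmod (count (fun c' => ~~ next_col P c') (iota 1 c) - 1) (fodd_gt0 n2_ge3); lia.
Qed.

Section OddColouring.

Variables (n1 n2 n3 : nat) (P : pred nat).
Local Notation f := (fodd n2).
Local Notation gL := (left_colour n2 P).
Local Notation gR := (right_colour n2 P).

Hypotheses (n1_gt0 : 0 < n1) (n1_le_n3 : n1 <= n3) (n2_odd : odd n2) (n2_ge3 : 3 <= n2).
Hypothesis ell_le : forall i, 1 <= i <= n1 -> ell n1 n3 i <= f.+1.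
Hypothesis P_sfirst : forall c, P c ->
  exists2 j, 1 <= j <= n1 & (c == sfirst n1 n3 j) && (2 <= ell n1 n3 j).
Hypothesis long_P : forall i, 1 <= i <= n1 -> ell n1 n3 i = f.+1 -> P (sfirst n1 n3 i).
Hypothesis P_not_adj : forall i j, 1 <= i <= n1 -> 1 <= j <= n1 ->
  P (sfirst n1 n3 i) -> P (sfirst n1 n3 j) -> nxt n1 j != i.
Hypothesis P_ex : exists c, P c.
Hypothesis many_left : 3 * f <= count (fun c => ~~ P c) (iota 1 n3).
Hypothesis many_right : 2 * f <= count (fun c => ~~ next_col P c) (iota 1 n3).

Let n2E : n2 = 2 * f + 1. Proof. exact: fodd_double. Qed.
Let f_gt0 : 0 < f. Proof. exact: fodd_gt0. Qed.
Let left_P c : P c -> gL c = n2 := @left_colour_P n2 P c.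
Let left_nP c : ~~ P c -> 1 <= gL c <= f := @left_colour_nP n2 P c n2_ge3.
Let right_P c : next_col P c -> gR c = n2 := @right_colour_P n2 P c.
Let right_nP c : ~~ next_col P c -> f.+1 <= gR c <= 2 * f := @right_colour_nP n2 P c n2_ge3.

Lemma P_block c : P c ->
  exists j, [/\ in_block n1 n3 j c, in_block n1 n3 j c.+1 & c = sfirst n1 n3 j].
Proof.
move=> /P_sfirst [j hj /andP[/eqP -> ell_j]]; exists j; split => //.
  exact: in_block_sfirst.
by rewrite /in_block hj /=; lia.
Qed.

Lemma next_col_block c : next_col P c ->
  exists j, [/\ in_block n1 n3 j c, c = (sfirst n1 n3 j).+1 & P (sfirst n1 n3 j)].
Proof.
move=> /andP[c_gt1 Pc]; have [j [_ Bj ej]] := P_block Pc; exists j.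
rewrite (prednK (ltnW c_gt1)) in Bj.
by split; rewrite // -ej ?prednK //; apply: ltnW.
Qed.

Lemma left_colour_inj i c c' : in_block n1 n3 i c -> in_block n1 n3 i c' -> gL c = gL c' -> c = c'.
Proof.
wlog le_cc' : c c' / c <= c' => [ih Bc Bc' e|Bc Bc'].
  case: (leqP c c') => [le|/ltnW le]; first exact: ih le Bc Bc' e.
  exact/esym/(ih _ _ le Bc' Bc (esym e)).
case Pc: (P c); case Pc': (P c').
- have [j [Bj _ ->]] := P_block Pc; have [j' [Bj' _ ->]] := P_block Pc'.
  by rewrite -(in_block_uniq n1_gt0 Bc Bj) -(in_block_uniq n1_gt0 Bc' Bj').
- by rewrite left_P //; have := left_nP (negbT Pc'); lia.
- by rewrite (left_P Pc'); have := left_nP (negbT Pc); lia.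
case: (ltngtP c c') le_cc' => // lt_cc' _; rewrite /left_colour Pc Pc' => /succn_inj e.
have /andP[hi /andP[c_ge1 _]] := in_block_range n1_gt0 Bc.
(* a block with f + 1 columns starts with a column of P *)
have few : c' - c < f.
  case: (ltnP (c' - c) f) => // long.
  have ell_i := ell_le hi; move: Bc Bc' => /andP[_ Bc] /andP[_ Bc'].
  by move: Pc; rewrite (_ : c = sfirst n1 n3 i) ?long_P //; lia.
case: (rank_colour_neq (Q := fun c => ~~ P c) f_gt0 _ _ _ _ e); rewrite ?Pc ?Pc' //; first lia.
by have := count_size (fun c => ~~ P c) (iota c.+1 (c' - c)); rewrite size_iota; lia.
Qed.

Lemma right_colour_inj i c c' : in_block n1 n3 i c -> in_block n1 n3 i c' -> gR c = gR c' -> c = c'.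
Proof.
wlog le_cc' : c c' / c <= c' => [ih Bc Bc' e|Bc Bc'].
  case: (leqP c c') => [le|/ltnW le]; first exact: ih le Bc Bc' e.
  exact/esym/(ih _ _ le Bc' Bc (esym e)).
case Pc: (next_col P c); case Pc': (next_col P c').
- have [j [Bj -> _]] := next_col_block Pc; have [j' [Bj' -> _]] := next_col_block Pc'.
  by rewrite -(in_block_uniq n1_gt0 Bc Bj) -(in_block_uniq n1_gt0 Bc' Bj').
- by rewrite right_P //; have := right_nP (negbT Pc'); lia.
- by rewrite (right_P Pc'); have := right_nP (negbT Pc); lia.
case: (ltngtP c c') le_cc' => // lt_cc' _.
rewrite /right_colour Pc Pc' => /eqP; rewrite eqn_add2l eqSS => /eqP e.
have /andP[hi /andP[c_ge1 _]] := in_block_range n1_gt0 Bc.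
have few : count (fun x => ~~ next_col P x) (iota c.+1 (c' - c)) < f.
  case: (ltnP (c' - c) f) => long.
    by have := count_size (fun c => ~~ next_col P c) (iota c.+1 (c' - c)); rewrite size_iota; lia.
  have ell_i := ell_le hi; move: Bc Bc' => /andP[_ Bc] /andP[_ Bc'].
  have c_first : c = sfirst n1 n3 i by lia.
  have Pc1 : next_col P c.+1 by rewrite /next_col /= c_first long_P //; lia.
  have c1_in : c.+1 \in iota c.+1 (c' - c) by rewrite mem_iota; lia.
  apply: leq_trans (count_predC_lt_size c1_in Pc1) _; rewrite size_iota; lia.
by case: (rank_colour_neq (Q := fun c => ~~ next_col P c) f_gt0 _ _ _ few e);
  rewrite ?Pc ?Pc'; lia.
Qed.

Lemma left_colour_thrice a : 1 <= a <= f -> exists c1 c2 c3,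
  [/\ [/\ 1 <= c1 <= n3, 1 <= c2 <= n3 & 1 <= c3 <= n3],
      [/\ c1 != c2, c1 != c3 & c2 != c3] & [/\ gL c1 = a, gL c2 = a & gL c3 = a]].
Proof.
move=> ha.
have reach k : k < 3 -> exists c, [/\ 1 <= c <= n3, ~~ P c &
    count (fun c => ~~ P c) (iota 1 c) = a + k * f].
  by move=> hk; apply: count_iota_reach; nia.
have colour c k : ~~ P c -> count (fun c => ~~ P c) (iota 1 c) = a + k * f -> gL c = a.
  by move=> nPc e; rewrite /left_colour (negbTE nPc) e mod_colour_val.
have [c1 [h1 nP1 e1]] := reach 0 isT; have [c2 [h2 nP2 e2]] := reach 1 isT.
have [c3 [h3 nP3 e3]] := reach 2 isT.
exists c1, c2, c3; split; first by split.
  by split; apply/eqP => ec; move: e1 e2 e3; rewrite ec; lia.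
by split; [apply: (colour _ 0) | apply: (colour _ 1) | apply: (colour _ 2)].
Qed.

Lemma odd_cone_colouring : cone_colouring n1 n2 n3 gL gR.
Proof.
split.
- move=> c _; apply/andP; split.
    by case Pc: (P c); [rewrite left_P | have := left_nP (negbT Pc)]; lia.
  by case Pc: (next_col P c); [rewrite right_P | have := right_nP (negbT Pc)]; lia.
- move=> c hc; case Pc: (P c); case P1c: (next_col P c).
  + have [j [Bj _ ej]] := P_block Pc; have [j' [Bj' ej' _]] := next_col_block P1c.
    by move: ej'; rewrite -(in_block_uniq n1_gt0 Bj Bj') -ej; lia.
  + by rewrite left_P //; have := right_nP (negbT P1c); lia.
  + by rewrite right_P //; have := left_nP (negbT Pc); lia.
  + by have := left_nP (negbT Pc); have := right_nP (negbT P1c); lia.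
- move=> a ha; rewrite /colours_at.
  case: (ltngtP a n2) => [lt_an2 | |->]; last first.
  + have [c0 Pc0] := P_ex; have [j [B0 B1 _]] := P_block Pc0.
    have /andP[_ h0] := in_block_range n1_gt0 B0; have /andP[_ h1] := in_block_range n1_gt0 B1.
    have P1c0 : next_col P c0.+1 by rewrite /next_col /=; apply/andP; split; lia.
    by exists c0, c0.+1; rewrite left_P // (right_P P1c0) eqxx orbT; split; lia.
  + lia.
  case: (leqP a f) => haf.
    have ha' : 1 <= a <= f by lia.
    have [c1 [c2 [c3 [[h1 h2 _] [n12 _ _] [e1 e2 _]]]]] := left_colour_thrice ha'.
    by exists c1, c2; rewrite e1 e2 eqxx; split.
  have reach k : k < 2 -> exists c, [/\ 1 <= c <= n3, ~~ next_col P c &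
      count (fun c => ~~ next_col P c) (iota 1 c) = a - f + k * f].
    by move=> hk; apply: count_iota_reach; nia.
  have colour c k : ~~ next_col P c ->
      count (fun c => ~~ next_col P c) (iota 1 c) = a - f + k * f -> gR c = a.
    by move=> nPc e; rewrite /right_colour (negbTE nPc) e mod_colour_val; lia.
  have [c1 [h1 nP1 e1]] := reach 0 isT; have [c2 [h2 nP2 e2]] := reach 1 isT.
  exists c1, c2; rewrite (colour c1 0) // (colour c2 1) // eqxx !orbT; split => //.
  by apply/eqP => ec; move: e1 e2; rewrite ec; lia.
- exact: left_colour_inj.
- exact: right_colour_inj.
- move=> i j c c' Bc Bc' eji.
  case Pc: (P c); last by have := left_nP (negbT Pc); case P1c: (next_col P c');
    [rewrite right_P | have := right_nP (negbT P1c)]; lia.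
  case P1c: (next_col P c'); last by rewrite left_P //; have := right_nP (negbT P1c); lia.
  have [i' [Bi' _ ec]] := P_block Pc; have [j' [Bj' _ Pj']] := next_col_block P1c.
  rewrite -(in_block_uniq n1_gt0 Bc' Bj') in Pj'; rewrite ec -(in_block_uniq n1_gt0 Bc Bi') in Pc.
  have /andP[hi _] := in_block_range n1_gt0 Bc; have /andP[hj _] := in_block_range n1_gt0 Bc'.
  by move: (P_not_adj hi hj Pc Pj'); rewrite eji eqxx.
Qed.

End OddColouring.

Lemma mem_cone_output n1 n2 n3 w :
  w \in WL n1 n2 n3 ++ WR n1 n2 n3 <-> cone_vertex n1 n3 (yL n1 n2 n3) (yR n1 n2 n3) w.
Proof. by apply: mem_cone_cat => {}w; [apply: mem_WL | apply: mem_WR]. Qed.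

Lemma ell_le_half n1 n2 n3 i : 0 < n1 -> 2 * n3 <= n1 * n2 -> 1 <= i <= n1 ->
  ell n1 n3 i <= n2.+1 %/ 2.
Proof.
move=> n1_gt0 n3_le hi.
have n2_le : n2 <= 2 * (n2.+1 %/ 2).
  by have := divn_eq n2.+1 2; have := ltn_pmod n2.+1 (isT : 0 < 2); lia.
have := ell_bounds n3 n1_gt0 hi; have := divn_eq n3 n1; have := ltn_pmod n3 n1_gt0.
have := @ell_long_mod n1 n3 n1_gt0 i hi.
set q := n3 %/ n1; set r := n3 %% n1; set h := n2.+1 %/ 2 in n2_le * => long r_lt n3E ell_i.
have := leq_mul (leqnn n1) n2_le.
case: (ltngtP q h) => [q_lt_h | h_lt_q | q_eq_h]; first lia.
  by have := leq_mul h_lt_q (leqnn n1); lia.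
case: (ell n1 n3 i =P q.+1) => [/long|]; last lia.
by rewrite q_eq_h in n3E; lia.
Qed.

Lemma even_case n1 n2 n3 : 2 <= n1 -> n1 <= n3 -> n2 <= n3 -> ~~ odd n2 -> 2 <= n2 ->
  2 * n3 <= n1 * n2 -> basic_landmark_system n1 n2 n3 (WL n1 n2 n3 ++ WR n1 n2 n3).
Proof.
move=> n1_ge2 n1_le_n3 n2_le_n3 n2_even n2_ge2 n3_le.
have n1_gt0 : 0 < n1 by apply: leq_trans n1_ge2.
apply: (cone_landmark_system n1_ge2 n1_le_n3 _ (@mem_cone_output n1 n2 n3)).
rewrite /yL /yR (negbTE n2_even); apply: even_cone_colouring => // i hi.
rewrite -[n2 %/ 2](_ : n2.+1 %/ 2 = _); first exact: ell_le_half n1_gt0 n3_le hi.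
by rewrite -[n2.+1]addn1 divnDl ?addn0 // dvdn2.
Qed.

Lemma fodd_succ n2 : odd n2 -> n2.+1 %/ 2 = (fodd n2).+1.
Proof.
move=> n2_odd; rewrite [in LHS](fodd_double n2_odd) (_ : _.+1 = (fodd n2).+1 * 2); last lia.
by rewrite mulnK.
Qed.

Lemma quotient_le_fodd n1 n2 n3 : 0 < n1 -> odd n2 -> 2 * n3 <= n1 * n2 -> n3 %/ n1 <= fodd n2.
Proof.
move=> n1_gt0 n2_odd n3_le; have := fodd_double n2_odd; have := divn_eq n3 n1.
set q := n3 %/ n1; set f := fodd n2 => n3E n2E.
case: (leqP q f) => // f_lt_q.
by have := leq_mul f_lt_q (leqnn n1); nia.
Qed.

Lemma count_block_predC_ge n1 n3 f (Q : pred nat) x0 i :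
  1 <= i <= n1 -> f <= ell n1 n3 i <= f.+1 ->
  (forall x, in_block n1 n3 i x -> Q x -> f < ell n1 n3 i /\ x = x0) ->
  f <= count (fun c => ~~ Q c) (iota (sfirst n1 n3 i) (ell n1 n3 i)).
Proof.
move=> hi ell_i Q_single; set s := iota _ _.
have -> : count (fun c => ~~ Q c) s = ell n1 n3 i - count Q s.
  have : count Q s + count (fun c => ~~ Q c) s = size s by exact: count_predC.
  by rewrite size_iota; lia.
have in_seg x : x \in s -> in_block n1 n3 i x by rewrite mem_iota /in_block hi.
case: (ltnP f (ell n1 n3 i)) => long.
  suff : count Q s <= 1 by lia.
  rewrite -(undup_id (iota_uniq _ _ : uniq s)); apply: count_undup_le1 => x y xs ys Qx Qy.
  by have [_ ->] := Q_single x (in_seg x xs) Qx; have [_ ->] := Q_single y (in_seg y ys) Qy.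
suff -> : count Q s = 0 by lia.
apply/eqP; rewrite -leqn0 leqNgt -has_count; apply/hasP => [[x xs Qx]].
by have [] := Q_single x (in_seg x xs) Qx; lia.
Qed.

(* When 2 r <= n1 the long blocks are 1, 3, ..., 2 r - 1 < n1. *)
Lemma long_blocks_not_adj n1 n3 i j : 3 <= n1 -> 2 * (n3 %% n1) <= n1 ->
  1 <= i <= n1 -> 1 <= j <= n1 ->
  n3 %/ n1 < ell n1 n3 i -> n3 %/ n1 < ell n1 n3 j -> nxt n1 j != i.
Proof.
move=> n1_ge3 r_le hi hj; have n1_gt0 : 0 < n1 by lia.
have r_half : n3 %% n1 <= n1 - n3 %% n1 by lia.
rewrite (ellE n3 n1_gt0 hi) (ellE n3 n1_gt0 hj) r_half.
case: ifP => [/andP[i_lt odd_i]|]; last lia.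
case: ifP => [/andP[j_lt odd_j]|]; last lia.
by move=> _ _; rewrite /nxt; case: (j =P n1) => e_jn1; apply/eqP; lia.
Qed.

Section OddCases.

Variables n1 n2 n3 : nat.
Hypotheses (n1_ge3 : 3 <= n1) (n1_le_n3 : n1 <= n3) (n2_odd : odd n2) (n2_ge3 : 3 <= n2).
Hypothesis n3_le : 2 * n3 <= n1 * n2.
Local Notation f := (fodd n2).

Let n1_gt0 : 0 < n1. Proof. by apply: leq_trans n1_ge3. Qed.
Let f_gt0 : 0 < f. Proof. by have := fodd_double n2_odd; lia. Qed.

Let ell_le i : 1 <= i <= n1 -> ell n1 n3 i <= f.+1.
Proof. by rewrite -fodd_succ //; apply: ell_le_half. Qed.

Section ManyLongBlocks.

Hypothesis k_ge2 : 2 <= kcount n1 n2 n3.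

Let inSP c : reflect (exists2 j, 1 <= j <= n1 & (f < ell n1 n3 j) && (sfirst n1 n3 j == c))
                     (inS n1 n2 n3 c).
Proof.
rewrite /inS k_ge2; apply: (iffP hasP) => [[j] | [j hj Pj]].
  by rewrite mem_iota => hj Pj; exists j => //; lia.
by exists j => //; rewrite mem_iota; lia.
Qed.

Let long_block_ex : exists2 i, 1 <= i <= n1 & f < ell n1 n3 i.
Proof.
have /hasP[i] : has (fun i => f < ell n1 n3 i) (iota 1 n1).
  by rewrite has_count (leq_trans _ k_ge2).
by rewrite mem_iota => hi long; exists i => //; lia.
Qed.

Let quotient_eq : n3 %/ n1 = f.
Proof.
have [i hi long] := long_block_ex.
by have := ell_bounds n3 n1_gt0 hi; have := quotient_le_fodd n1_gt0 n2_odd n3_le; lia.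
Qed.

Let double_mod_le : 2 * (n3 %% n1) <= n1.
Proof. by have := divn_eq n3 n1; have := fodd_double n2_odd; rewrite quotient_eq; nia. Qed.

Let inS_block i x : in_block n1 n3 i x -> inS n1 n2 n3 x -> f < ell n1 n3 i /\ x = sfirst n1 n3 i.
Proof.
move=> Bx /inSP [j hj /andP[long /eqP ej]]; rewrite -ej in Bx *.
by rewrite (in_block_uniq n1_gt0 Bx (in_block_sfirst n1_gt0 n1_le_n3 hj)).
Qed.

Let inS_sfirst i : 1 <= i <= n1 -> f < ell n1 n3 i -> inS n1 n2 n3 (sfirst n1 n3 i).
Proof. by move=> hi long; apply/inSP; exists i; rewrite ?long ?eqxx. Qed.

Let count_predC_ge (Q : pred nat) (x0 : nat -> nat) :
  (forall i x, in_block n1 n3 i x -> Q x -> f < ell n1 n3 i /\ x = x0 i) ->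
  n1 * f <= count (fun c => ~~ Q c) (iota 1 n3).
Proof.
move=> Q_single; rewrite (count_columns_by_block n3 n1_gt0) mulnC.
rewrite -[X in f * X](size_iota 1 n1); apply: sumn_ge_mul => i; rewrite mem_iota => hi.
apply: (count_block_predC_ge (x0 := x0 i)); first lia.
  by have := ell_bounds n3 n1_gt0 (_ : 1 <= i <= n1); rewrite quotient_eq; lia.
exact: Q_single.
Qed.

Lemma many_long_cone_colouring :
  cone_colouring n1 n2 n3 (left_colour n2 (inS n1 n2 n3)) (right_colour n2 (inS n1 n2 n3)).
Proof.
apply: odd_cone_colouring => //.
- by move=> c /inSP [j hj /andP[long /eqP <-]]; exists j; rewrite ?eqxx //=; lia.
- by move=> i hi long; apply: inS_sfirst; lia.
- move=> i j hi hj Pi Pj.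
  have [long_i _] := inS_block (in_block_sfirst n1_gt0 n1_le_n3 hi) Pi.
  have [long_j _] := inS_block (in_block_sfirst n1_gt0 n1_le_n3 hj) Pj.
  by apply: (long_blocks_not_adj (n3 := n3)); rewrite ?quotient_eq.
- by have [i hi long] := long_block_ex; exists (sfirst n1 n3 i); apply: inS_sfirst.
- apply: (leq_trans _ (count_predC_ge inS_block)); exact: leq_mul.
apply: (leq_trans _ (count_predC_ge (x0 := fun i => (sfirst n1 n3 i).+1) _)).
  exact: leq_mul (ltnW n1_ge3) (leqnn f).
move=> i x Bx /andP[x_gt1 /inSP [j hj /andP[long /eqP ej]]].
have Bj : in_block n1 n3 j x by rewrite /in_block hj /=; lia.
by rewrite (in_block_uniq n1_gt0 Bx Bj); split; lia.
Qed.

Lemma odd_many_long_case : basic_landmark_system n1 n2 n3 (WL n1 n2 n3 ++ WR n1 n2 n3).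
Proof.
apply: (cone_landmark_system _ n1_le_n3 _ (@mem_cone_output n1 n2 n3)); first lia.
by rewrite /yL /yR n2_odd; apply: many_long_cone_colouring.
Qed.

End ManyLongBlocks.

Section FewLongBlocks.

Hypotheses (n3_ge : 3 * maxn n1 n2 <= 2 * n3) (k_le1 : kcount n1 n2 n3 <= 1).

Let n2E : n2 = 2 * f + 1. Proof. exact: fodd_double. Qed.

Let inSE c : inS n1 n2 n3 c = (c == 1).
Proof. by rewrite /inS ifN //; lia. Qed.

Let nextE c : next_col (inS n1 n2 n3) c = (c == 2).
Proof. by rewrite /next_col inSE; case: c => [|[|[|c]]]. Qed.

Let ell1_ge2 : 2 <= ell n1 n3 1.
Proof.
case: (posnP (n3 %% n1)) => [r0|r_gt0]; last by rewrite ell1_long //; lia.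
have := ell_bounds n3 n1_gt0 (_ : 1 <= 1 <= n1); have := divn_eq n3 n1.
by rewrite r0; nia.
Qed.

Let in_block1 j c : in_block n1 n3 j c -> 1 <= c <= 2 -> j = 1.
Proof. by move=> Bj hc; apply: (in_block_uniq n1_gt0 Bj); rewrite /in_block sfirst1 /=; lia. Qed.

Let many_single (a : nat) : 1 <= a <= n3 ->
  count (fun c => c != a) (iota 1 n3) = n3.-1.
Proof.
move=> ha; have := count_predC (pred1 a) (iota 1 n3).
rewrite size_iota count_uniq_mem ?iota_uniq // mem_iota (_ : 1 <= a < 1 + n3); last lia.
have -> : count (fun c => c != a) (iota 1 n3) = count (predC (pred1 a)) (iota 1 n3) by [].
lia.
Qed.

Let many_left : 3 * f <= count (fun c => ~~ inS n1 n2 n3 c) (iota 1 n3).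
Proof.
rewrite (eq_count (a2 := fun c => c != 1)) => [|c]; last by rewrite inSE.
by rewrite many_single; lia.
Qed.

Let many_right : 2 * f <= count (fun c => ~~ next_col (inS n1 n2 n3) c) (iota 1 n3).
Proof.
rewrite (eq_count (a2 := fun c => c != 2)) => [|c]; last by rewrite nextE.
by rewrite many_single; lia.
Qed.

Lemma few_long_cone_colouring :
  cone_colouring n1 n2 n3 (left_colour n2 (inS n1 n2 n3)) (right_colour n2 (inS n1 n2 n3)).
Proof.
apply: odd_cone_colouring => //.
- move=> c; rewrite inSE => /eqP ->; exists 1; first lia.
  by rewrite sfirst1 eqxx.
- move=> i hi long; rewrite inSE; apply/eqP.
  case: (i =P 1) => [->|/eqP i_ne1]; first exact: sfirst1.
  suff : 2 <= kcount n1 n2 n3 by lia.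
  have ell_i_le := ell_le_ell1 n3 n1_gt0 hi.
  by apply: (count_uniq_ge2 (iota_uniq 1 n1) (_ : 1 != i)); rewrite 1?eq_sym ?mem_iota /=; lia.
- move=> i j hi hj; rewrite !inSE => /eqP si /eqP sj.
  have := in_block1 (in_block_sfirst n1_gt0 n1_le_n3 hi).
  have := in_block1 (in_block_sfirst n1_gt0 n1_le_n3 hj).
  by rewrite si sj => /(_ isT) -> /(_ isT) ->; apply: nxt_neq; lia.
- by exists 1; rewrite inSE.
Qed.

Let colour1_elsewhere c : exists a b,
  [/\ 1 <= a <= n3, 1 <= b <= n3, a != b, a != c & b != c] /\
  left_colour n2 (inS n1 n2 n3) a = 1 /\ left_colour n2 (inS n1 n2 n3) b = 1.
Proof.
have one_le_f : 1 <= 1 <= f by rewrite fodd_gt0.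
have [c1 [c2 [c3 [[h1 h2 h3] [n12 n13 n23] [e1 e2 e3]]]]] :=
  left_colour_thrice n1_gt0 n1_le_n3 n2_odd n2_ge3 many_left many_right one_le_f.
case: (c1 =P c) => [<-|/eqP nc1]; first by exists c2, c3; split; [split; lia | split].
case: (c2 =P c) => [<-|/eqP nc2]; first by exists c1, c3; split; [split; lia | split].
by exists c1, c2; split; [split; lia | split].
Qed.

Lemma odd_few_long_case x z : mkv x 1 z \in WL n1 n2 n3 -> x \notin [:: 1; 2; n1] ->
  basic_landmark_system n1 n2 n3 (modify n2 x z (WL n1 n2 n3) ++ WR n1 n2 n3).
Proof.
move=> /mem_WL [i [c [Bc [-> yLc ->]]]].
rewrite !inE => /norP[i_ne1 /norP[i_ne2 _]].
have c_ne2 : c != 2.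
  by apply/eqP => ec; rewrite ec in Bc; rewrite (in_block1 Bc) in i_ne1.
have := mem_modify n2 n1_gt0 Bc (esym yLc) (@mem_WL n1 n2 n3).
move/mem_cone_cat/(_ (@mem_WR n1 n2 n3)).
apply: (cone_landmark_system _ n1_le_n3); first lia.
rewrite /yL /yR n2_odd in yLc *.
apply: (recolour_cone_colouring n1_gt0 few_long_cone_colouring Bc); first lia.
- move=> c' Bc'; case Pc': (inS n1 n2 n3 c').
    move: Pc'; rewrite inSE => /eqP ec'; rewrite ec' in Bc'.
    by rewrite (in_block1 Bc') in i_ne1.
  by have := left_colour_nP n2_ge3 (negbT Pc'); lia.
- move=> j c' Bc' eji; case P1c': (next_col (inS n1 n2 n3) c').
    move: P1c'; rewrite nextE => /eqP ec'; rewrite ec' in Bc'.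
    move: i_ne2; rewrite -eji (in_block1 Bc') // /nxt.
    by case: ifP => [/eqP|]; [lia | rewrite eqxx].
  by have := right_colour_nP n2_ge3 (negbT P1c'); lia.
- by rewrite /right_colour nextE (negbTE c_ne2); have := fodd_gt0 n2_ge3; lia.
have [a [b [[ha hb nab nac nbc] [ea eb]]]] := colour1_elsewhere c.
have gLc : left_colour n2 (inS n1 n2 n3) c = 1 := esym yLc.
by exists a, b; split; rewrite // /colours_at ea eb gLc eqxx.
Qed.

End FewLongBlocks.

End OddCases.

Theorem mainTheorem7 (n1 n2 n3 : nat) (W : seq vtx) :
  3 <= n1 -> 3 <= n2 -> n1 <= n3 -> n2 <= n3 ->
  3 * maxn n1 n2 <= 2 * n3 -> 2 * n3 <= n1 * n2 ->
  middle_cone_output n1 n2 n3 W ->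
  basic_landmark_system n1 n2 n3 W.
Proof.
move=> n1_ge3 n2_ge3 n1_le_n3 n2_le_n3 n3_ge n3_le; rewrite /middle_cone_output.
case: ifP => [/andP[n2_odd k_le1] [x [z [xz_in x_not ->]]] | k_case ->].
  exact: odd_few_long_case.
case n2_odd: (odd n2).
  by apply: odd_many_long_case => //; move: k_case; rewrite n2_odd /=; lia.
by apply: even_case => //; [lia | rewrite n2_odd | lia].
Qed.
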